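(* Let $m=2$ attributes, each taking values in $\{1,\dots,d\}$, with $p(\cdot\mid z)$ an additive energy distribution for all $z\in\{1,\dots,d\}^2$. Suppose $\mathcal{Z}^{\mathsf{train}}$ (the support of the training prior) consists of $s$ attribute vectors drawn uniformly at random from $\{1,\dots,d\}^2$, and let $q(x,z)=q(z)q(x\mid z)$ be a test distribution with $q(x\mid z)=p(x\mid z)$ for all $z\in\{1,\dots,d\}^2$ and attribute support $\mathcal{Z}^{\mathsf{test}}\subseteq\{1,\dots,d\}^2$. Let $c>0$. If $s\ge 8cd\log d$ with $d$ sufficiently large, the additive energy classifier satisfies $\hat p(z\mid x)=p(z\mid x)$ for all $z\in\mathcal{Z}^{\mathsf{train}}$ and $x\in\mathbb{R}^n$, and $\hat q(z)=q(z)$ for all $z\in\mathcal{Z}^{\mathsf{test}}$, then with probability greater than $1-\frac1c$ the CRM predictor satisfies $\hat q(z\mid x)=q(z\mid x)$ for all $z\in\mathcal{Z}^{\mathsf{test}}$ and $x\in\mathbb{R}^n$.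
   Context: $\sigma(z)\in\{0,1\}^{2d}$ is the concatenation of one-hot encodings of $z_1,z_2$. An additive energy distribution family is $p(x\mid z)=\frac{1}{\mathbb{Z}(z)}\exp(-\langle\sigma(z),E(x)\rangle)$ with $E:\mathbb{R}^n\to\mathbb{R}^{2d}$, $\mathbb{Z}(z)=\int\exp(-\langle\sigma(z),E(x)\rangle)dx<\infty$, support $\mathbb{R}^n$. Given $\hat E:\mathbb{R}^n\to\mathbb{R}^{2d}$, $\hat B:\mathcal{Z}^{\mathsf{train}}\to\mathbb{R}$, the additive energy classifier is $\hat p(z\mid x)\propto\exp(-\langle\sigma(z),\hat E(x)\rangle+\log p(z)-\hat B(z))$, normalized over $z\in\mathcal{Z}^{\mathsf{train}}$. The extrapolated bias is $B^\star(z)=\log\mathbb{E}_{x\sim p(x)}\big[\exp(-\langle\sigma(z),\hat E(x)\rangle)/\sum_{\tilde z\in\mathcal{Z}^{\mathsf{train}}}\exp(-\langle\sigma(\tilde z),\hat E(x)\rangle+\log p(\tilde z)-\hat B(\tilde z))\big]$, with $p(x)$ the training marginal. Given a distribution $\hat q$ on attributes, the CRM predictor is $\hat q(z\mid x)\propto\exp(-\langle\sigma(z),\hat E(x)\rangle+\log\hat q(z)-B^\star(z))$, normalized over the support of $\hat q$. *)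

From HB Require Import structures.
From mathcomp Require Import all_boot all_order all_algebra.
From mathcomp Require Import all_classical all_reals all_analysis.
Set Implicit Arguments. Unset Strict Implicit. Unset Printing Implicit Defensive.
Import Order.TTheory GRing.Theory Num.Theory.
Local Open Scope classical_set_scope.
Local Open Scope ring_scope.

Notation attr d := ('I_d * 'I_d)%type.

Section AdditiveEnergy.
Variable R : realType.

(* sigma(z) in {0,1}^(2d): concatenation of the one-hot encodings of z1, z2. *)
Definition onehot2 (d : nat) (z : attr d) (i : 'I_(d + d)) : R :=
  ((i == lshift d z.1) || (i == rshift d z.2))%:R.

Variables (dT : measure_display) (T : measurableType dT).

Definition energy (d : nat) (E : T -> 'I_(d + d) -> R) (x : T) (z : attr d) : R :=
  \sum_(i < d + d) onehot2 z i * E x i.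

Variable mu : {measure set T -> \bar R}.

Definition partitionZ (d : nat) (E : T -> 'I_(d + d) -> R) (z : attr d) : \bar R :=
  (\int[mu]_x (expR (- energy E x z))%:E)%E.

Definition additive_energy_family (d : nat) (E : T -> 'I_(d + d) -> R) : Prop :=
  (forall i, measurable_fun setT (fun x => E x i)) /\
  (forall z : attr d, (partitionZ E z < +oo)%E).

Definition pcond (d : nat) (E : T -> 'I_(d + d) -> R) (z : attr d) (x : T) : R :=
  expR (- energy E x z) / fine (partitionZ E z).

Definition is_attr_distr (d : nat) (pz : attr d -> R) : Prop :=
  (forall z, 0 <= pz z) /\ \sum_(z : attr d) pz z = 1.

Definition attr_support (d : nat) (pz : attr d -> R) : {set attr d} :=
  [set z | 0 < pz z].

Definition marginal (d : nat) (E : T -> 'I_(d + d) -> R) (pz : attr d -> R) (x : T) : R :=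
  \sum_(z : attr d) pz z * pcond E z x.

Definition posterior (d : nat) (E : T -> 'I_(d + d) -> R) (pz : attr d -> R)
  (z : attr d) (x : T) : R :=
  pz z * pcond E z x / marginal E pz x.

Definition aec_logit (d : nat) (Eh : T -> 'I_(d + d) -> R) (pz : attr d -> R)
  (Bh : attr d -> R) (x : T) (z : attr d) : R :=
  - energy Eh x z + ln (pz z) - Bh z.

Definition aec (d : nat) (Ztr : {set attr d}) (Eh : T -> 'I_(d + d) -> R)
  (pz : attr d -> R) (Bh : attr d -> R) (z : attr d) (x : T) : R :=
  expR (aec_logit Eh pz Bh x z) / \sum_(z' in Ztr) expR (aec_logit Eh pz Bh x z').

Definition extrap_bias (d : nat) (E : T -> 'I_(d + d) -> R) (pz : attr d -> R)
  (Ztr : {set attr d}) (Eh : T -> 'I_(d + d) -> R) (Bh : attr d -> R) (z : attr d) : R :=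
  ln (fine (\int[mu]_x
    (marginal E pz x * (expR (- energy Eh x z) /
        \sum_(z' in Ztr) expR (aec_logit Eh pz Bh x z')))%:E)%E).

Definition crm_logit (d : nat) (E : T -> 'I_(d + d) -> R) (pz : attr d -> R)
  (Ztr : {set attr d}) (Eh : T -> 'I_(d + d) -> R) (Bh : attr d -> R)
  (qh : attr d -> R) (x : T) (z : attr d) : R :=
  - energy Eh x z + ln (qh z) - extrap_bias E pz Ztr Eh Bh z.

Definition crm (d : nat) (E : T -> 'I_(d + d) -> R) (pz : attr d -> R)
  (Ztr : {set attr d}) (Eh : T -> 'I_(d + d) -> R) (Bh : attr d -> R)
  (qh : attr d -> R) (z : attr d) (x : T) : R :=
  expR (crm_logit E pz Ztr Eh Bh qh x z) /
  \sum_(z' in attr_support qh) expR (crm_logit E pz Ztr Eh Bh qh x z').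

End AdditiveEnergy.

(* Probability, under s i.i.d. uniform draws from {1..d}^2, of an event on
   the drawn s-tuple. *)
Definition prob_draws (R : realType) (d s : nat) (P : s.-tuple (attr d) -> Prop) : R :=
  (\sum_(t : s.-tuple (attr d)) (`[< P t >])%:R) / ((d * d) ^ s)%:R.

Definition drawn_set (d s : nat) (t : s.-tuple (attr d)) : {set attr d} :=
  [set z in t].

From HB Require Import structures.
From mathcomp Require Import all_boot all_order all_algebra.
From mathcomp Require Import all_classical all_reals all_analysis.
From mathcomp Require Import measurable_realfun zify ring lra.
Import Order.TTheory GRing.Theory Num.Theory.
Local Open Scope classical_set_scope.
Local Open Scope ring_scope.

Set Implicit Arguments.
Unset Strict Implicit.
Unset Printing Implicit Defensive.

(* If the additive energy classifier is exact on Z^train, then for z in Z^train the energy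
   gap E(x, z) - Eh(x, z) equals ln r(x) + k(z), where r(x) is the ratio of the classifier's
   normaliser to the marginal p(x).  Both energies are a term in z1 plus a term in z2, so for
   two inputs x, x' the difference of the gaps is an additive function of (z1, z2) which is
   constant on Z^train; it is constant everywhere as soon as Z^train is connected as a bipartite
   graph.  The gap is then ln r(x) + k(z) for every z, hence B*(z) = k(z) + ln Z(z) and the CRM
   logits are ln (q(z) p(x | z)) + ln r(x): the CRM predictor is the test posterior.
   If the s drawn edges leave the graph disconnected, they all avoid some cut having
   0 < k <= d vertices on one side.  A uniform edge avoids it with probability at most
   1 - k / (2d), so for s >= 8 d ln d the union bound over cuts bounds the failure probability
   by (1 + d^-4)^(2d) - 1 <= 4/d < 1/c for large d; when c <= 1 the claim only needs one
   connected draw. *)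

Local Notation colouring d := {ffun 'I_d + 'I_d -> bool}.

Lemma expr1D_sub1_le (R : realType) (x : R) n : 0 <= x -> n%:R * x <= 2^-1 ->
  (1 + x) ^+ n - 1 <= 2 * (n%:R * x).
Proof.
move=> x_ge0; set y := n%:R * x => y_le.
have y_ge0 : 0 <= y by rewrite mulr_ge0.
have pow_le : (1 + x) ^+ n <= expR y.
  rewrite /y expRM_natl lerXn2r ?nnegrE ?expR_ge0 ?expR_ge1Dx //.
  by rewrite addr_ge0.
have exp_le : expR y <= (1 - y)^-1.
  have := expR_ge1Dx (- y); rewrite expRN => h.
  by rewrite -[expR y]invrK lef_pV2 ?posrE ?invr_gt0 ?expR_gt0 //; lra.
have inv_le : (1 - y)^-1 <= 1 + 2 * y.
  rewrite -[X in X <= _]mul1r ler_pdivrMr; last lra.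
  have : 0 <= y * (1 - 2 * y) by apply: mulr_ge0; lra.
  nra.
lra.
Qed.

Lemma sum_all_tuples (R : numDomainType) (T : finType) (A : pred T) s :
  \sum_(t : s.-tuple T) (all A t)%:R = (#|A| ^ s)%:R :> R.
Proof.
rewrite -[s in (_ ^ s)%N]card_ord -card_ffun_on -sum1_card natr_sum [RHS]big_mkcond /=.
rewrite (reindex (@tuple_of_finfun T s)) /=; last first.
  by exists finfun_of_tuple => t _; [exact: tuple_of_finfunK | exact: finfun_of_tupleK].
apply: eq_bigr => f _; have -> : all A (tuple_of_finfun f) = (f \in ffun_on A).
  apply/allP/ffun_onP => [Af i|Af _ /mapP[i _ ->]]; last exact: Af.
  by apply: Af; apply: map_f; rewrite mem_enum.
by case: (f \in ffun_on A).
Qed.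

Section AttributeGraph.
Variable d : nat.

(* [Z] is read as the edge set of the bipartite graph on 'I_d + 'I_d joining [inl z.1] to
   [inr z.2]; it is connected iff every non-constant 2-colouring of the vertices has an edge
   of [Z] with differently coloured ends. *)
Definition attr_connected (Z : {set attr d}) : Prop :=
  forall f : colouring d, (exists v, f v) -> (exists v, ~~ f v) ->
  exists2 z, z \in Z & f (inl z.1) != f (inr z.2).

Lemma attr_connected_additive (V : zmodType) (Z : {set attr d}) (a b : 'I_d -> V) g :
  attr_connected Z -> (forall z, z \in Z -> a z.1 + b z.2 = g) ->
  forall i j, a i + b j = g.
Proof.
move=> Zconn abZ i j; apply: contrapT => /eqP abg.
pose level v := match v with inl i' => a i' | inr j' => g - b j' end.
pose f := [ffun v => level v == a i].
have fi : f (inl i) by rewrite ffunE.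
have fj : ~~ f (inr j) by rewrite ffunE; apply: contra abg => /eqP <-; rewrite subrK.
have [z zZ] := Zconn f (ex_intro _ (inl i) fi) (ex_intro _ (inr j) fj).
by rewrite !ffunE /= -(abZ z zZ) addrK eqxx.
Qed.

End AttributeGraph.

Section AttributeDistributions.
Variables (R : realType) (d : nat).
Implicit Types (pz qz qh : attr d -> R).

Lemma attr_distr_ex_gt0 pz : is_attr_distr pz -> exists z, 0 < pz z.
Proof.
case=> p_ge0 p_sum1; have [/existsP //|/existsPn p_le0] := boolP [exists z, 0 < pz z].
move: p_sum1; rewrite big1 => [/eqP|z _]; first by rewrite eq_sym oner_eq0.
by apply/eqP; rewrite eq_le p_ge0 andbT leNgt p_le0.
Qed.

Lemma notin_attr_support {pz z} : is_attr_distr pz -> z \notin attr_support pz -> pz z = 0.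
Proof. by case=> p_ge0 _; rewrite inE -leNgt => p_le0; apply/eqP; rewrite eq_le p_le0 p_ge0. Qed.

Lemma attr_distr_eq qz qh : is_attr_distr qz -> is_attr_distr qh ->
  {in attr_support qz, qh =1 qz} -> qh = qz.
Proof.
move=> qzD [qh_ge0 qh_sum1] qhE.
have le_qz_qh z : qz z <= qh z.
  by have [/qhE -> //|/(notin_attr_support qzD) ->] := boolP (z \in attr_support qz).
have sum_diff0 : \sum_z (qh z - qz z) = 0 by rewrite sumrB qh_sum1 qzD.2 subrr.
apply/funext => z; apply/eqP; rewrite -subr_eq0; apply/eqP.
by apply: (psumr_eq0P (P := predT) _ sum_diff0) => // w _; rewrite subr_ge0.
Qed.

End AttributeDistributions.

Section EnergyFacts.
Variables (R : realType) (dT : measure_display) (T : measurableType dT).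
Variable mu : {measure set T -> \bar R}.
Variable d : nat.
Implicit Types (E : T -> 'I_(d + d) -> R) (z : attr d) (pz : attr d -> R).

Lemma energyE E x z : energy E x z = E x (lshift d z.1) + E x (rshift d z.2).
Proof.
have onehot2E i : onehot2 R z i = (i == lshift d z.1)%:R + (i == rshift d z.2)%:R.
  rewrite /onehot2; have [->|] := eqVneq i (lshift d z.1); last by rewrite add0r.
  by rewrite eq_lrshift addr0.
have pick j : \sum_i (i == j)%:R * E x i = E x j.
  by rewrite (bigD1 j) //= eqxx mul1r big1 ?addr0 // => i /negbTE ->; rewrite mul0r.
rewrite /energy -!pick -big_split /=.
by apply: eq_bigr => i _; rewrite onehot2E mulrDl.
Qed.

Lemma measurable_expNenergy E z : (forall i, measurable_fun setT (fun x => E x i)) ->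
  measurable_fun setT (fun x => expR (- energy E x z)).
Proof.
move=> mE; apply: measurableT_comp => //; apply: measurableT_comp => //.
by rewrite (funext (fun x => energyE E x z)); exact: measurable_funD.
Qed.

Lemma partitionZ_fin_num E z : additive_energy_family mu E -> partitionZ mu E z \is a fin_num.
Proof.
move=> [_ Zfin]; rewrite ge0_fin_numE ?Zfin //.
by apply: integral_ge0 => x _; rewrite lee_fin expR_ge0.
Qed.

Lemma partitionZ_gt0 E z : (0 < mu setT)%E -> additive_energy_family mu E ->
  0 < fine (partitionZ mu E z).
Proof.
move=> mu_gt0 hE; have Zfin := partitionZ_fin_num z hE.
rewrite lt_def fine_ge0 ?andbT; last first.
  by apply: integral_ge0 => x _; rewrite lee_fin expR_ge0.
apply: contra_ltN mu_gt0 => /eqP Z0; rewrite le_eqVlt; apply/orP; left.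
have : (\int[mu]_x `|(expR (- energy E x z))%:E| = 0)%E.
  rewrite -[RHS]/(0%:E) -Z0 fineK //; apply: eq_integral => x _.
  by rewrite gee0_abs // lee_fin expR_ge0.
move/(ae_eq_integral_abs mu measurableT ((measurable_EFinP _ _).2 (measurable_expNenergy z hE.1))).
case=> N [mN N0 subN]; rewrite eq_le measure_ge0 andbT -N0 le_measure ?inE //.
by move=> x _; apply: subN => /(_ I) /= /eqP; rewrite eqe gt_eqF // expR_gt0.
Qed.

Lemma pcond_gt0 E z x : (0 < mu setT)%E -> additive_energy_family mu E -> 0 < pcond mu E z x.
Proof. by move=> mu_gt0 hE; rewrite divr_gt0 ?expR_gt0 ?partitionZ_gt0. Qed.

Lemma marginal_gt0 E pz x : (0 < mu setT)%E -> additive_energy_family mu E ->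
  is_attr_distr pz -> 0 < marginal mu E pz x.
Proof.
move=> mu_gt0 hE pzD; have [z pz_gt0] := attr_distr_ex_gt0 pzD.
rewrite /marginal (bigD1 z) //=; apply: ltr_pwDl; first by rewrite mulr_gt0 ?pcond_gt0.
by apply: sumr_ge0 => w _; rewrite mulr_ge0 ?(pzD.1) ?ltW ?pcond_gt0.
Qed.

Lemma marginal_attr_support E pz x : is_attr_distr pz ->
  marginal mu E pz x = \sum_(z in attr_support pz) pz z * pcond mu E z x.
Proof.
move=> pzD; rewrite /marginal [RHS]big_mkcond /=; apply: eq_bigr => z _.
by case: ifPn => // /(notin_attr_support pzD) ->; rewrite mul0r.
Qed.

End EnergyFacts.

Section Identification.
Variables (R : realType) (dT : measure_display) (T : measurableType dT).
Variable mu : {measure set T -> \bar R}.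
Variables (d : nat) (E Eh : T -> 'I_(d + d) -> R) (pz Bh : attr d -> R) (Z : {set attr d}).
Hypotheses (mu_gt0 : (0 < mu setT)%E) (hE : additive_energy_family mu E).
Hypotheses (Zconn : attr_connected Z) (pzD : is_attr_distr pz) (pz_supp : attr_support pz = Z).
Hypothesis aec_exact : forall z x, z \in Z -> aec Z Eh pz Bh z x = posterior mu E pz z x.

Let Zf z := fine (partitionZ mu E z).
Let norm x := \sum_(z in Z) expR (aec_logit Eh pz Bh x z).
Let ratio x := norm x / marginal mu E pz x.
Let gap_at x i := E x i - Eh x i.
Let gap x z := energy E x z - energy Eh x z.

Let Zf_gt0 z : 0 < Zf z. Proof. exact: partitionZ_gt0. Qed.
Let marginal_pz_gt0 x : 0 < marginal mu E pz x. Proof. exact: marginal_gt0. Qed.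
Let pz_gt0 z : z \in Z -> 0 < pz z. Proof. by rewrite -pz_supp inE. Qed.

Let norm_gt0 x : 0 < norm x.
Proof.
have [z pz_z_gt0] := attr_distr_ex_gt0 pzD.
rewrite /norm (bigD1 z) -?pz_supp ?inE //=.
exact: ltr_pwDl (expR_gt0 _) (sumr_ge0 _ (fun w _ => expR_ge0 _)).
Qed.

Let ratio_gt0 x : 0 < ratio x. Proof. exact: divr_gt0. Qed.

Let gapE x z : gap x z = gap_at x (lshift d z.1) + gap_at x (rshift d z.2).
Proof. by rewrite /gap /gap_at !energyE; ring. Qed.

Lemma gap_on_train z x : z \in Z -> gap x z = ln (ratio x) + (Bh z - ln (Zf z)).
Proof.
move=> zZ; have := aec_exact x zZ.
rewrite /aec /posterior /pcond /aec_logit -/(norm x) -/(Zf z) !expRD !expRN lnK ?posrE ?pz_gt0 //.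
move=> post; apply: expR_inj.
rewrite !expRD !expRN !lnK ?posrE //.
have -> : expR (energy E x z) / expR (energy Eh x z) = expR (energy E x z) *
    ((expR (energy Eh x z))^-1 * pz z / expR (Bh z) / norm x) * (norm x * expR (Bh z) / pz z).
  by field; rewrite !gt_eqF ?expR_gt0 ?pz_gt0.
rewrite post /ratio; field.
by rewrite !gt_eqF ?expR_gt0 ?pz_gt0 ?Zf_gt0.
Qed.

Lemma gap_offset_const z x x' : gap x z - ln (ratio x) = gap x' z - ln (ratio x').
Proof.
pose a i := gap_at x (lshift d i) - gap_at x' (lshift d i).
pose b j := gap_at x (rshift d j) - gap_at x' (rshift d j).
have ab_train w : w \in Z -> a w.1 + b w.2 = ln (ratio x) - ln (ratio x').
  move=> wZ; have := gap_on_train x wZ; have := gap_on_train x' wZ.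
  by rewrite !gapE /a /b; lra.
by have := attr_connected_additive Zconn ab_train z.1 z.2; rewrite !gapE /a /b; lra.
Qed.

Lemma extrap_biasE z x :
  extrap_bias mu E pz Z Eh Bh z = gap x z - ln (ratio x) + ln (Zf z).
Proof.
set k := gap x z - ln (ratio x).
have integrandE y : marginal mu E pz y * (expR (- energy Eh y z) / norm y) =
    expR k * expR (- energy E y z).
  have -> : - energy Eh y z = - energy E y z + ln (ratio y) + k.
    by have := gap_offset_const z y x; rewrite /k /gap; lra.
  rewrite !expRD lnK ?posrE // /ratio; field.
  by rewrite !gt_eqF ?marginal_pz_gt0.
rewrite /extrap_bias; under eq_integral => y _ do rewrite integrandE EFinM.
rewrite (ge0_integralZl_EFin _ measurableT) ?expR_ge0 //; last first.
  exact/measurable_EFinP/measurable_expNenergy/hE.1.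
rewrite -/(partitionZ mu E z) -(fineK (partitionZ_fin_num z hE)) -EFinM /=.
by rewrite lnM ?posrE ?expR_gt0 ?Zf_gt0 // expRK.
Qed.

Lemma expR_crm_logit (qh : attr d -> R) x z : 0 < qh z ->
  expR (crm_logit mu E pz Z Eh Bh qh x z) = ratio x * (qh z * pcond mu E z x).
Proof.
move=> qh_gt0; rewrite /crm_logit (extrap_biasE z x) /pcond -/(Zf z).
have -> : - energy Eh x z + ln (qh z) - (gap x z - ln (ratio x) + ln (Zf z)) =
    - energy E x z + ln (ratio x) + ln (qh z) - ln (Zf z) by rewrite /gap; lra.
rewrite !expRD !expRN !lnK ?posrE //; field.
by rewrite !gt_eqF ?expR_gt0 ?Zf_gt0.
Qed.

Lemma crm_posterior qz z x : is_attr_distr qz -> z \in attr_support qz ->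
  crm mu E pz Z Eh Bh qz z x = posterior mu E qz z x.
Proof.
move=> qzD z_qz; have qz_gt0 : 0 < qz z by rewrite inE in z_qz.
have sumE : \sum_(w in attr_support qz) expR (crm_logit mu E pz Z Eh Bh qz x w) =
    ratio x * marginal mu E qz x.
  rewrite (marginal_attr_support _ _ _ qzD) mulr_sumr.
  by apply: eq_bigr => w; rewrite inE => /(@expR_crm_logit qz x w).
rewrite /crm sumE (@expR_crm_logit qz x z qz_gt0) /posterior; field.
by rewrite !gt_eqF ?marginal_gt0.
Qed.

End Identification.

Section Cuts.
Variable d : nat.
Implicit Types (f : colouring d) (z : attr d).

Definition cut_size f := #|[pred v | f v]|.
Definition small_cut f := (0 < cut_size f <= d)%N.
Definition uncut f : pred (attr d) := [pred z | f (inl z.1) == f (inr z.2)].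

Lemma not_attr_connected_small_cut s (t : s.-tuple (attr d)) :
  ~ attr_connected (drawn_set t) -> exists f, small_cut f && all (uncut f) t.
Proof.
move=> not_conn.
have [f [[v fv] [w fw] f_uncut]] :
    exists f, [/\ exists v, f v, exists v, ~~ f v & all (uncut f) t].
  apply: contrapT => no_cut; apply: not_conn => f fv fw; apply: contrapT => f_uncut.
  apply: no_cut; exists f; split => //; apply/allP => z zt.
  by apply: contrapT => /negP z_cut; apply: f_uncut; exists z; rewrite ?inE.
have [f_small|f_large] := leqP (cut_size f) d.
  exists f; rewrite /small_cut f_small f_uncut !andbT.
  by apply/card_gt0P; exists v.
exists [ffun v => ~~ f v]; rewrite -andbA; apply/and3P; split.
- by apply/card_gt0P; exists w; rewrite inE ffunE.
- have cut_sizeC : (cut_size f + cut_size [ffun v => ~~ f v] = d + d)%N.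
    have := cardC [pred v | f v]; rewrite card_sum card_ord => <-; congr (_ + _).
    by apply: eq_card => u; rewrite !inE ffunE.
  by move: f_large; lia.
- by apply/allP => z /(allP f_uncut); rewrite /uncut /= !ffunE => /eqP ->.
Qed.

Lemma attr_connected_indicator_ge (R : realType) s (t : s.-tuple (attr d)) :
  1 - \sum_(f | small_cut f) (all (uncut f) t)%:R <= (`[< attr_connected (drawn_set t) >])%:R :> R.
Proof.
have sum_ge0 : 0 <= \sum_(f | small_cut f) (all (uncut f) t)%:R :> R.
  by apply: sumr_ge0 => f _; exact: ler0n.
case: asboolP => [_|/not_attr_connected_small_cut [f /andP[f_small f_uncut]]].
  by rewrite lerBlDr lerDl.
by rewrite (bigD1 f) //= f_uncut subr_le0 lerDl sumr_ge0 // => g _; rewrite ler0n.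
Qed.

Definition left_cut f := [set i | f (inl i)]%SET.
Definition right_cut f := [set j | f (inr j)]%SET.

Lemma cut_sizeE f : cut_size f = (#|left_cut f| + #|right_cut f|)%N.
Proof.
rewrite /cut_size -[LHS]sum1_card big_sumType /= !sum1dep_card.
by congr (_ + _); apply: eq_card => i; rewrite !inE.
Qed.

Lemma card_uncut f : #|uncut f| =
  (#|left_cut f| * #|right_cut f| + #|~: left_cut f| * #|~: right_cut f|)%N.
Proof.
set X := finset.setX (left_cut f) (right_cut f).
set Y := finset.setX (~: left_cut f) (~: right_cut f).
have -> : #|uncut f| = #|X :|: Y|.
  by apply: eq_card => z; rewrite !inE; case: (f (inl z.1)); case: (f (inr z.2)).
rewrite cardsU (@eq_card0 _ (X :&: Y)) ?subn0 ?cardsX // => z.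
by rewrite !inE; case: (f (inl z.1)); case: (f (inr z.2)).
Qed.

Lemma card_uncut_le f : small_cut f -> (2 * #|uncut f| + d * cut_size f <= 2 * (d * d))%N.
Proof.
rewrite /small_cut card_uncut cut_sizeE => /andP[_ size_le].
have := cardsC (left_cut f); have := cardsC (right_cut f); rewrite !card_ord.
set a := #|left_cut f|; set b := #|right_cut f|.
set a' := #|~: left_cut f|; set b' := #|~: right_cut f| => db da.
have a_le : (a <= b')%N by lia.
have b_le : (b <= a')%N by lia.
(* d (a + b) - 4 a b = (a b' - a a) + (b a' - b b) + (a - b)^2 *)
have agm := (nat_AGM2 a b).1.
have := leq_mul (leqnn a) a_le; have := leq_mul (leqnn b) b_le.
have -> : (d * (a + b) = a * (b + b') + b * (a + a'))%N by rewrite db da; lia.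
rewrite -{1}da -db; nia.
Qed.

Lemma sum_cut_weights (R : comPzSemiRingType) (x : R) :
  \sum_(f : colouring d) x ^+ cut_size f = (1 + x) ^+ (d + d).
Proof.
pose w (v : 'I_d + 'I_d) (b : bool) := if b then x else 1.
under eq_bigr => f _ do rewrite /cut_size -prodr_const.
rewrite (eq_bigr (fun f : {ffun _} => \prod_v w v (f v))) => [|f _]; last first.
  by rewrite big_mkcond /=; apply: eq_bigr => v _; rewrite /w inE; case: (f v).
rewrite -(bigA_distr_bigA w) /= (eq_bigr (fun _ => 1 + x)) => [|v _]; last first.
  by rewrite big_bool addrC.
by rewrite prodr_const card_sum card_ord.
Qed.

End Cuts.

Section CutProbability.
Variables (R : realType) (d : nat).
Implicit Types f : colouring d.

Lemma uncut_draws_le s f : (0 < d)%N ->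
  8 * d%:R * ln (d%:R : R) <= s%:R -> small_cut f ->
  (#|uncut f| ^ s)%:R <= ((d * d) ^ s)%:R * (d%:R ^- 4) ^+ cut_size f :> R.
Proof.
move=> d_gt0 s_ge f_small; set D : R := d%:R; set k : R := (cut_size f)%:R.
have D_gt0 : 0 < D by rewrite ltr0n.
have k_ge0 : 0 <= k by exact: ler0n.
have uncut_le : (#|uncut f|%:R : R) <= D * D * expR (- (k / (2 * D))).
  have := card_uncut_le f_small; rewrite -(ler_nat R) !natrD !natrM -/D -/k => card_le.
  apply: le_trans (ler_wpM2l _ (expR_ge1Dx _)); last by rewrite mulr_ge0 ?ltW.
  have -> : D * D * (1 + - (k / (2 * D))) = D * D - D * k / 2 by field; rewrite gt_eqF.
  lra.
have exp_le : expR (- (k / (2 * D))) ^+ s <= (D ^- 4) ^+ cut_size f.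
  have lnD_le : 4 * ln D <= s%:R / (2 * D) by rewrite ler_pdivlMr ?mulr_gt0 //; lra.
  rewrite -expRM_natl -[D ^- 4]lnK ?posrE ?invr_gt0 ?exprn_gt0 // -expRM_natl ler_expR.
  rewrite lnV ?posrE ?exprn_gt0 // lnXn // -/k.
  have -> : s%:R * - (k / (2 * D)) = - (k * (s%:R / (2 * D))) by field; rewrite gt_eqF.
  by have := ler_wpM2l k_ge0 lnD_le; lra.
rewrite !natrX natrM -/D; apply: (le_trans (y := (D * D * expR (- (k / (2 * D)))) ^+ s)).
  by rewrite lerXn2r // nnegrE ?ler0n // (le_trans _ uncut_le).
by rewrite exprMn ler_wpM2l // exprn_ge0 // mulr_ge0 // ltW.
Qed.

Lemma sum_small_cut_weights_le : (4 <= d)%N ->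
  \sum_(f : colouring d | small_cut f) (d%:R ^- 4) ^+ cut_size f <= 4 / d%:R :> R.
Proof.
move=> d_ge4; set D : R := d%:R; set x := D ^- 4.
have D_ge4 : 4 <= D by rewrite (ler_nat R 4 d).
have x_ge0 : 0 <= x by rewrite invr_ge0 exprn_ge0 //; lra.
pose f0 : colouring d := [ffun=> false].
have size_f0 : cut_size f0 = 0%N by apply: eq_card0 => v; rewrite inE ffunE.
have small_le : \sum_(f : colouring d | small_cut f) x ^+ cut_size f <=
    \sum_(f : colouring d) x ^+ cut_size f - 1.
  rewrite [X in _ <= X - _](bigD1 f0) //= size_f0 expr0 addrC addrK.
  rewrite [X in X <= _]big_mkcond [X in _ <= X]big_mkcond /=; apply: ler_sum => f _.
  case: ifP => [/andP[size_gt0 _]|_]; last by case: ifP; rewrite ?exprn_ge0.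
  by rewrite ifT //; apply: contraTneq size_gt0 => ->; rewrite size_f0.
have Dx_le : D * x <= D^-1 / 4.
  have -> : D * x = (D ^+ 3)^-1 by rewrite /x; field; rewrite gt_eqF //; lra.
  rewrite -invfM lef_pV2 ?posrE ?exprn_gt0 ?mulr_gt0 //; try lra.
  by rewrite !exprS expr0 mulr1; nra.
have invD_gt0 : 0 < D^-1 by rewrite invr_gt0; lra.
have invD_le1 : D^-1 <= 1 by rewrite invf_le1; lra.
have dx_eq : (d + d)%:R * x = 2 * (D * x) by rewrite natrD -/D; ring.
have dx_le : (d + d)%:R * x <= 2^-1 by rewrite dx_eq; lra.
have := expr1D_sub1_le x_ge0 dx_le; rewrite sum_cut_weights in small_le; rewrite dx_eq.
lra.
Qed.

Lemma le_prob_draws s (P Q : s.-tuple (attr d) -> Prop) :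
  (forall t, P t -> Q t) -> prob_draws R P <= prob_draws R Q.
Proof.
move=> PQ; rewrite /prob_draws ler_wpM2r ?invr_ge0 ?ler0n //.
by apply: ler_sum => t _; case: (asboolP (P t)) => [/PQ/asboolP ->|_]; rewrite ?ler0n.
Qed.

Lemma prob_draws_connected_ge s : (4 <= d)%N -> 8 * d%:R * ln (d%:R : R) <= s%:R ->
  1 - 4 / d%:R <= prob_draws R (fun t : s.-tuple (attr d) => attr_connected (drawn_set t)).
Proof.
move=> d_ge4 s_ge; set N : R := ((d * d) ^ s)%:R.
have N_gt0 : 0 < N by rewrite ltr0n expn_gt0 muln_gt0 andbb; apply/orP; left; lia.
have uncut_le : \sum_(f : colouring d | small_cut f)
    \sum_(t : s.-tuple (attr d)) (all (uncut f) t)%:R <= N * (4 / d%:R).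
  apply: le_trans (ler_wpM2l (ltW N_gt0) (sum_small_cut_weights_le d_ge4)).
  rewrite mulr_sumr; apply: ler_sum => f f_small; rewrite sum_all_tuples.
  by apply: uncut_draws_le => //; lia.
rewrite /prob_draws ler_pdivlMr //.
apply: le_trans (ler_sum _ (fun t _ => attr_connected_indicator_ge R t)).
rewrite sumrB sumr_const card_tuple card_prod card_ord exchange_big /= -/N.
by rewrite mulrBl mul1r mulrC; lra.
Qed.

Lemma exists_connected_draw s : (0 < d)%N -> (d + d <= s)%N ->
  exists t : s.-tuple (attr d), attr_connected (drawn_set t).
Proof.
case: d => // n _ s_ge.
(* Truncated subtraction and the clamping of [inord] make [t] list the edges (i, 0) for i <= n
   and then (0, j): a double star. *)
pose t := [tuple (inord i, inord (i - n.+1)) : attr n.+1 | i < s].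
have in_t (i : 'I_s) : (inord i, inord (i - n.+1)) \in drawn_set t.
  by rewrite inE; have := mem_tnth i t; rewrite tnth_mktuple.
have edge_l (i : 'I_n.+1) : (i, ord0) \in drawn_set t.
  have i_lt : (i < s)%N by move: (ltn_ord i); lia.
  have := in_t (Ordinal i_lt); rewrite /= inord_val.
  have -> : (i - n.+1 = 0)%N by apply/eqP; rewrite subn_eq0 ltnW.
  by have -> : (inord 0 : 'I_n.+1) = ord0 by apply: val_inj; rewrite /= inordK.
have edge_r (j : 'I_n.+1) : (ord0, j) \in drawn_set t.
  have j_lt : (n.+1 + j < s)%N by move: (ltn_ord j); lia.
  have := in_t (Ordinal j_lt); rewrite /= addKn inord_val.
  have -> // : (inord (n.+1 + j) : 'I_n.+1) = ord0.
  by apply: val_inj; rewrite /= /inord val_insubd ltnNge leq_addr.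
exists t => f [v fv] [w fw]; apply: contrapT => no_cut.
have uncutE z : z \in drawn_set t -> f (inl z.1) = f (inr z.2).
  by move=> zt; apply: contrapT => /eqP fz; apply: no_cut; exists z.
have f_const u : f u = f (inr ord0).
  case: u => [i|j]; first exact: (uncutE _ (edge_l i)).
  by rewrite -(uncutE _ (edge_r j)) (uncutE _ (edge_l ord0)).
by move: fw; rewrite f_const -(f_const v) fv.
Qed.

Lemma prob_draws_connected_gt0 s : (0 < d)%N -> (d + d <= s)%N ->
  0 < prob_draws R (fun t : s.-tuple (attr d) => attr_connected (drawn_set t)).
Proof.
move=> d_gt0 s_ge; have [t0 t0_conn] := exists_connected_draw d_gt0 s_ge.
rewrite /prob_draws divr_gt0 ?ltr0n ?expn_gt0 ?muln_gt0 ?d_gt0 // (bigD1 t0) //=.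
by apply: ltr_pwDl; [rewrite asboolT // ltr0n | apply: sumr_ge0 => t _; rewrite ler0n].
Qed.

(* d > 4 c makes 4 / d < 1 / c, and d > exp (1 / c) makes c ln d > 1, hence s > 8 d. *)
Lemma prob_draws_connected_gt (c : R) s : 0 < c -> (4 <= d)%N -> 4 * c + expR c^-1 < d%:R ->
  8 * c * d%:R * ln (d%:R : R) <= s%:R ->
  1 - c^-1 < prob_draws R (fun t : s.-tuple (attr d) => attr_connected (drawn_set t)).
Proof.
move=> c_gt0 d_ge4 d_gt s_ge; have expRc_gt0 := expR_gt0 c^-1.
have d_gt0 : 0 < (d%:R : R) by lra.
have lnd_gt : c^-1 < ln (d%:R : R) by rewrite -ltr_expR lnK ?posrE //; lra.
have cln_gt1 : 1 < c * ln (d%:R : R).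
  by rewrite -[X in X < _](mulfV (lt0r_neq0 c_gt0)) ltr_pM2l.
have [c_le1|c_gt1] := leP c 1.
  have s_ge2d : (d + d <= s)%N.
    rewrite -(ler_nat R) natrD; apply: le_trans s_ge.
    have : d%:R < d%:R * (c * ln (d%:R : R)) by rewrite -[X in X < _]mulr1 ltr_pM2l.
    lra.
  have := prob_draws_connected_gt0 (leq_trans (isT : (0 < 4)%N) d_ge4) s_ge2d.
  have : 1 <= c^-1 by rewrite invf_ge1.
  lra.
have cV_gt0 : 0 < c^-1 by rewrite invr_gt0.
have dln_ge0 : 0 <= d%:R * ln (d%:R : R) by rewrite mulr_ge0 ?ltW //; lra.
have s_ge' : 8 * d%:R * ln (d%:R : R) <= s%:R by apply: le_trans s_ge; nra.
have := prob_draws_connected_ge d_ge4 s_ge'.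
have : 4 / d%:R < c^-1.
  rewrite ltr_pdivrMr //; have : c * c^-1 = 1 by rewrite mulfV ?lt0r_neq0.
  nra.
lra.
Qed.

End CutProbability.

Theorem theorem6 (R : realType) (c : R) : 0 < c ->
  exists d0 : nat, forall d s : nat, (d0 <= d)%N ->
  8 * c * d%:R * ln (d%:R : R) <= s%:R ->
  forall (dT : measure_display) (T : measurableType dT)
    (mu : {measure set T -> \bar R}),
  (0 < mu setT)%E ->
  forall E : T -> 'I_(d + d) -> R, additive_energy_family mu E ->
  forall qz qh : attr d -> R, is_attr_distr qz -> is_attr_distr qh ->
  (forall z, z \in attr_support qz -> qh z = qz z) ->
  1 - c^-1 <
  prob_draws R (fun t : s.-tuple (attr d) =>
    forall (pz : attr d -> R) (Eh : T -> 'I_(d + d) -> R) (Bh : attr d -> R),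
      is_attr_distr pz -> attr_support pz = drawn_set t ->
      (forall z x, z \in drawn_set t -> aec (drawn_set t) Eh pz Bh z x = posterior mu E pz z x) ->
      forall z x, z \in attr_support qz ->
        crm mu E pz (drawn_set t) Eh Bh qh z x = posterior mu E qz z x).
Proof.
move=> c_gt0; exists (maxn 4 (Num.truncn (4 * c + expR c^-1)).+1).
move=> d s; rewrite geq_max => /andP[d_ge4 d_ge] s_ge dT T mu mu_gt0 E hE qz qh qzD qhD qh_qz.
rewrite (attr_distr_eq qzD qhD qh_qz).
have d_gt : 4 * c + expR c^-1 < d%:R by apply: lt_le_trans (truncnS_gt _) _; rewrite ler_nat.
apply: lt_le_trans (prob_draws_connected_gt c_gt0 d_ge4 d_gt s_ge) _.
apply: le_prob_draws => t t_conn pz Eh Bh pzD pz_supp aec_exact z x.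
exact: crm_posterior.
Qed.
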